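(* Let $D$ be a quadratic discriminant and suppose that every rational prime $p$ with $p\le\sqrt{|D|/3}$ (if $D<0$) or $p\le\sqrt{D/5}$ (if $D>0$) that is irreducible in $\mathcal{O}_D$ is also prime in $\mathcal{O}_D$. Then every rational prime number factors as a product of prime elements of $\mathcal{O}_D$.
   Context: A quadratic discriminant is a nonsquare integer $D$ with $D\equiv 0$ or $1\pmod 4$. Write $D=4d+\sigma$ with $\sigma\in\{0,1\}$, let $\tau=\frac{\sigma+\sqrt{D}}{2}$, and $\mathcal{O}_D=\mathbb{Z}[\tau]=\mathbb{Z}+\mathbb{Z}\tau$. In a domain, an element is irreducible if it is nonzero, not a unit, and any factorization of it into two elements has a unit factor; it is prime if it is nonzero, not a unit, and whenever it divides a product it divides one of the factors. *)

From mathcomp Require Import all_boot all_algebra.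
Set Implicit Arguments. Unset Strict Implicit. Unset Printing Implicit Defensive.
Import GRing.Theory Num.Theory.
Local Open Scope ring_scope.

Definition quad_disc (D : int) : Prop :=
  (~ exists z : int, D = z * z) /\ ((D %% 4)%Z = 0 \/ (D %% 4)%Z = 1).

(* D = 4 d + sigma, sigma in {0,1} *)
Definition qsigma (D : int) : int := (D %% 4)%Z.
Definition qd (D : int) : int := (D %/ 4)%Z.

(* Elements of O_D = Z + Z tau, represented as a + b tau,
   where tau = (sigma + sqrt D)/2 satisfies tau^2 = sigma tau + d. *)
Record OD := mkOD { od_a : int; od_b : int }.

Definition od_zero : OD := mkOD 0 0.
Definition od_one : OD := mkOD 1 0.

(* (a + b tau)(c + e tau) = (ac + be d) + (ae + bc + be sigma) tau *)
Definition od_mul (D : int) (x y : OD) : OD :=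
  mkOD (od_a x * od_a y + od_b x * od_b y * qd D)
       (od_a x * od_b y + od_b x * od_a y + od_b x * od_b y * qsigma D).

Definition od_of_nat (n : nat) : OD := mkOD n%:Z 0.

Definition od_unit (D : int) (x : OD) : Prop := exists y, od_mul D x y = od_one.

Definition od_dvd (D : int) (x y : OD) : Prop := exists z, y = od_mul D x z.

Definition od_irreducible (D : int) (x : OD) : Prop :=
  x <> od_zero /\ ~ od_unit D x /\
  forall y z, x = od_mul D y z -> od_unit D y \/ od_unit D z.

Definition od_prime (D : int) (x : OD) : Prop :=
  x <> od_zero /\ ~ od_unit D x /\
  forall y z, od_dvd D x (od_mul D y z) -> od_dvd D x y \/ od_dvd D x z.

Definition od_prod (D : int) (s : seq OD) : OD := foldr (od_mul D) od_one s.

Fixpoint od_all_prime (D : int) (s : seq OD) : Prop :=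
  match s with
  | [::] => True
  | x :: s' => od_prime D x /\ od_all_prime D s'
  end.

From mathcomp Require Import all_boot all_order all_algebra.
From mathcomp Require Import ring zify.
From Stdlib Require Import Classical.
Import Order.TTheory GRing.Theory Num.Theory.
Local Open Scope ring_scope.

(* Every rational prime p factors into prime elements of O_D, by strong
   induction on p.  Write N for the norm form N(a + b tau) = a^2 + sigma a b - d b^2.
   - If some w has norm +-p, then w is prime (O_D / (w) is the field Z/p),
     and p = w * conj(w) up to a sign absorbed into the conjugate.
   - Otherwise no element has norm +-p, so any factorisation of p has a
     factor of norm +-1, i.e. p is irreducible.  In the Minkowski range
     3p^2 <= -D (resp. 5p^2 <= D) the hypothesis makes p prime.
   - Above that range, suppose p | g h but p divides neither g nor h.  Then p
     divides the norm of some beta not divisible by p, which yields a root r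
     of N(r + tau) modulo p; moving r within its class we get
     N(t + tau) = p m with 0 < |m| < p.  By induction |m| is a product of
     primes; cancelling them from p m = (t + tau)(t + tau') leaves p = u v
     with u | t + tau, v | t + tau'.  Since no norm equals +-p, u or v is a
     unit, so p divides t + tau or t + tau', whose tau-coordinate is +-1. *)

Lemma int_mul_eq1 (a b : int) : a * b = 1 -> a = 1 \/ a = -1.
Proof.
move=> h; have := intUnitRing.unitzPl (etrans (mulrC _ _) h).
by rewrite qualifE => /orP[/eqP|/eqP]; auto.
Qed.

Lemma prime_dvdzM (q : nat) (a b : int) :
  prime q -> (q%:Z %| a * b)%Z -> (q%:Z %| a)%Z \/ (q%:Z %| b)%Z.
Proof. by move=> pq; rewrite !dvdzE abszM /= Euclid_dvdM //; case/orP; auto. Qed.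

Lemma prime_ndvd_sign {q : nat} {e : int} : prime q -> e * e = 1 -> ~ (q%:Z %| e)%Z.
Proof.
move=> pq /int_mul_eq1 e1; have q1 := prime_gt1 pq.
by case: e1 => ->; rewrite ?dvdzN dvdzE /= dvdn1 => /eqP q_eq1; rewrite q_eq1 in q1.
Qed.

Lemma int_sign_split (N : int) (q : nat) : N = q%:Z \/ N = - q%:Z ->
  exists e : int, e * e = 1 /\ N = e * q%:Z.
Proof. by case=> ->; [exists 1 | exists (-1)]; split => //; ring. Qed.

Section QuadraticOrderArithmetic.
Variable D : int.

(* The norm form, the conjugation a + b tau |-> a + b tau' where
   tau' = sigma - tau, and negation on O_D. *)
Definition od_norm (x : OD) : int :=
  od_a x * od_a x + qsigma D * od_a x * od_b x - qd D * od_b x * od_b x.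
Definition od_conj (x : OD) : OD := mkOD (od_a x + qsigma D * od_b x) (- od_b x).
Definition od_opp (x : OD) : OD := mkOD (- od_a x) (- od_b x).

Lemma od_ext (x y : OD) : od_a x = od_a y -> od_b x = od_b y -> x = y.
Proof. by case: x; case: y => /= ? ? ? ? -> ->. Qed.

Lemma od_mulC x y : od_mul D x y = od_mul D y x.
Proof. case: x y => a b [c e]; apply: od_ext => /=; ring. Qed.

Lemma od_mulA x y z : od_mul D x (od_mul D y z) = od_mul D (od_mul D x y) z.
Proof. case: x y z => a b [c e] [f g]; apply: od_ext => /=; ring. Qed.

Lemma od_mul1 x : od_mul D x od_one = x.
Proof. case: x => a b; apply: od_ext => /=; ring. Qed.

Lemma od_mul1l x : od_mul D od_one x = x.
Proof. by rewrite od_mulC od_mul1. Qed.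

Lemma od_mul_opp x y : od_mul D x (od_opp y) = od_opp (od_mul D x y).
Proof. case: x y => a b [c e]; apply: od_ext => /=; ring. Qed.

Lemma od_scale (c : int) u : od_mul D (mkOD c 0) u = mkOD (c * od_a u) (c * od_b u).
Proof. case: u => a b; apply: od_ext => /=; ring. Qed.

Lemma od_scale_inj (c : int) u v : c != 0 ->
  od_mul D (mkOD c 0) u = od_mul D (mkOD c 0) v -> u = v.
Proof. by move=> c0; rewrite !od_scale => -[/(mulfI c0) ea /(mulfI c0) eb]; apply: od_ext. Qed.

Lemma od_normM x y : od_norm (od_mul D x y) = od_norm x * od_norm y.
Proof. case: x y => a b [c e]; rewrite /od_norm /=; ring. Qed.

Lemma od_mul_conj x : od_mul D x (od_conj x) = mkOD (od_norm x) 0.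
Proof. case: x => a b; apply: od_ext; rewrite /od_norm /=; ring. Qed.

Lemma od_norm_conj x : od_norm (od_conj x) = od_norm x.
Proof. case: x => a b; rewrite /od_norm /=; ring. Qed.

Lemma od_norm_opp x : od_norm (od_opp x) = od_norm x.
Proof. case: x => a b; rewrite /od_norm /=; ring. Qed.

Lemma od_norm_scalar (c : int) : od_norm (mkOD c 0) = c * c.
Proof. rewrite /od_norm /=; ring. Qed.

Lemma od_of_natM (m n : nat) : od_of_nat (m * n) = od_mul D (od_of_nat m) (od_of_nat n).
Proof. by apply: od_ext; rewrite /= ?PoszM; ring. Qed.

Lemma od_scalar_dvd_b {c : int} {w} : od_dvd D (mkOD c 0) w -> (c %| od_b w)%Z.
Proof. by case=> z ->; rewrite od_scale /=; apply/dvdzP; exists (od_b z); rewrite mulrC. Qed.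

Lemma od_unit_norm x : od_unit D x -> od_norm x = 1 \/ od_norm x = -1.
Proof.
case=> y hy; apply: (@int_mul_eq1 _ (od_norm y)).
by rewrite -od_normM hy od_norm_scalar mulr1.
Qed.

Lemma od_norm_unit x : od_norm x = 1 \/ od_norm x = -1 -> od_unit D x.
Proof.
case=> hx.
- by exists (od_conj x); rewrite od_mul_conj hx.
- by exists (od_opp (od_conj x)); rewrite od_mul_opp od_mul_conj hx /od_opp /= opprK oppr0.
Qed.

Lemma od_dvd_assoc {P u v a} :
  P = od_mul D u v -> od_unit D v -> od_dvd D u a -> od_dvd D P a.
Proof.
move=> -> [w vw] [z ->]; exists (od_mul D w z).
by rewrite -(od_mulA u v) (od_mulA v) vw od_mul1l.
Qed.

End QuadraticOrderArithmetic.

(* A rational prime dividing N(a + b tau) and b also divides a,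
   since a^2 = N(a + b tau) - sigma a b + d b^2. *)
Lemma prime_dvd_norm_a D {q : nat} {a b} : prime q ->
  (q%:Z %| od_norm D (mkOD a b))%Z -> (q%:Z %| b)%Z -> (q%:Z %| a)%Z.
Proof.
move=> pq /dvdzP [n hn] /dvdzP [l hl].
have : (q%:Z %| a * a)%Z.
  apply/dvdzP; exists (n - qsigma D * a * l + qd D * l * l * q%:Z).
  have -> : a * a = od_norm D (mkOD a b) - qsigma D * a * b + qd D * b * b.
    by rewrite /od_norm /=; ring.
  by rewrite hn hl; ring.
by case/prime_dvdzM.
Qed.

(* For
   pi = x + y tau with N(pi) = e q, the integer q does not divide y, and the
   linear form lam(a + b tau) = a y - b x is, up to the unit y mod q, the ring
   map O_D -> Z/q sending tau to -x/y; its kernel is the ideal (pi). *)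
Section NormPrime.
Variables (D : int) (q : nat) (x y e : int).
Hypotheses (q_prime : prime q) (e_sign : e * e = 1).
Hypothesis norm_pi : od_norm D (mkOD x y) = e * q%:Z.

Definition od_lam (w : OD) : int := od_a w * y - od_b w * x.

(* If q | y then also q | x, so q^2 | N(pi) = e q and q would divide the sign e. *)
Lemma norm_prime_ndvd_b : ~ (q%:Z %| y)%Z.
Proof.
have q1 := prime_gt1 q_prime.
move=> qy; have /dvdzP [k xk] : (q%:Z %| x)%Z.
  apply: (prime_dvd_norm_a D q_prime) qy.
  by rewrite norm_pi; apply/dvdzP; exists e.
move/dvdzP: qy => [l yl].
have : q%:Z * od_norm D (mkOD k l) = e.
  apply: (@mulfI _ q%:Z); first by lia.
  by rewrite [q%:Z * e]mulrC -norm_pi /od_norm xk yl /=; ring.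
move=> qe; apply: (prime_ndvd_sign q_prime e_sign).
by apply/dvdzP; exists (od_norm D (mkOD k l)); rewrite -qe mulrC.
Qed.

(* Multiplicativity of lam modulo q: the defect is a multiple of N(pi). *)
Lemma od_lamM g h :
  od_lam g * od_lam h = od_lam (od_mul D g h) * y + od_b g * od_b h * od_norm D (mkOD x y).
Proof. by case: g h => a b [c f]; rewrite /od_lam /od_norm /=; ring. Qed.

Lemma od_lam_multiple z : od_lam (od_mul D (mkOD x y) z) = - od_b z * od_norm D (mkOD x y).
Proof. by case: z => a b; rewrite /od_lam /od_norm /=; ring. Qed.

(* The kernel of lam mod q is contained in (pi): the quotient is w * conj(pi) / N(pi). *)
Lemma od_lam_dvd w : (q%:Z %| od_lam w)%Z -> od_dvd D (mkOD x y) w.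
Proof.
have q1 := prime_gt1 q_prime.
case: w => a b /dvdzP [k2 hk2]; rewrite /od_lam /= in hk2.
set s := qsigma D; set d := qd D.
pose c1 := a * (x + s * y) - b * y * d.
have /dvdzP [k1 hk1] : (q%:Z %| c1)%Z.
  have : (q%:Z %| c1 * y)%Z.
    apply/dvdzP; exists (b * e + (x + s * y) * k2).
    have -> : c1 * y = b * od_norm D (mkOD x y) + (x + s * y) * (a * y - b * x).
      by rewrite /od_norm /c1 /=; ring.
    by rewrite norm_pi hk2; ring.
  by case/prime_dvdzM => // /norm_prime_ndvd_b.
set N := od_norm D (mkOD x y).
have N0 : N != 0 by rewrite /N norm_pi; apply/eqP; nia.
exists (mkOD (e * k1) (- e * k2)).
apply: (@od_scale_inj D N) => //.
have quot : od_mul D (od_conj D (mkOD x y)) (mkOD a b)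
          = od_mul D (mkOD N 0) (mkOD (e * k1) (- e * k2)).
  rewrite od_scale /N norm_pi /=; apply: od_ext => /=.
  - have -> : e * q%:Z * (e * k1) = e * e * (k1 * q%:Z) by ring.
    by rewrite e_sign mul1r -hk1 /c1; ring.
  - have -> : e * q%:Z * (- e * k2) = - (e * e * (k2 * q%:Z)) by ring.
    by rewrite e_sign mul1r -hk2; ring.
rewrite (od_mulA D (mkOD N 0)) (od_mulC D (mkOD N 0) (mkOD x y)).
by rewrite -od_mulA -quot od_mulA od_mul_conj od_mulC.
Qed.

Lemma norm_prime_is_prime : od_prime D (mkOD x y).
Proof.
have q1 := prime_gt1 q_prime.
split; last split.
- by move=> pi0; move: norm_pi; rewrite pi0 /od_norm /=; nia.
- by move/od_unit_norm; rewrite norm_pi; nia.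
move=> g h [z gh].
have : (q%:Z %| od_lam g * od_lam h)%Z.
  rewrite od_lamM gh od_lam_multiple norm_pi.
  by apply/dvdzP; exists ((- od_b z * e) * y + od_b g * od_b h * e); ring.
by case/prime_dvdzM => // /od_lam_dvd; auto.
Qed.

End NormPrime.

Lemma norm_prime_elem {D} {q : nat} {w} : prime q ->
  od_norm D w = q%:Z \/ od_norm D w = - q%:Z -> od_prime D w.
Proof.
case: w => x y pq /int_sign_split [e [e_sign hN]].
exact: norm_prime_is_prime pq e_sign hN.
Qed.

(* If n b^2 is a perfect square with b > 0, then n itself is a square:
   descend on b by dividing out a prime factor of b from both sides. *)
Lemma nat_square_of_scaled {n b c : nat} : (0 < b)%N -> (n * b * b = c * c)%N ->
  exists z, n = (z * z)%N.
Proof.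
move: c; elim/ltn_ind: b => b IH c b0 h.
case: (ltngtP b 1) => [|b1|b1]; [lia | | by exists c; rewrite -h b1; lia].
have pp := pdiv_prime b1; set p := pdiv b in pp.
have p0 := prime_gt0 pp; have p1 := prime_gt1 pp.
have pb : (p %| b)%N by apply: pdiv_dvd.
have /dvdnP [c' ec] : (p %| c)%N.
  have : (p %| c * c)%N by rewrite -h dvdn_mull.
  by rewrite Euclid_dvdM // orbb.
move/dvdnP: pb => [b' eb].
apply: (IH b' _ c'); [nia | nia |].
have : ((p * p) * (n * b' * b') = (p * p) * (c' * c'))%N by rewrite eb ec in h; nia.
by move/eqP; rewrite eqn_pmul2l ?muln_gt0 ?p0 // => /eqP.
Qed.

Lemma int_square_of_scaled {n b c : int} : b != 0 -> n * b * b = c * c ->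
  exists z : int, n = z * z.
Proof.
move=> b0 h; case: (lerP 0 n) => n0; last by nia.
case: n n0 h => [n|//] _ h.
have := congr1 absz h; rewrite !abszM /= => habs.
have bpos : (0 < `|b|)%N by rewrite absz_gt0.
have [z ->] := nat_square_of_scaled bpos habs.
by exists z%:Z; rewrite PoszM.
Qed.

Definition minkowski_range (D : int) (p : nat) : bool :=
  if D < 0 then 3 * (p%:Z) ^+ 2 <= - D else 5 * (p%:Z) ^+ 2 <= D.

Lemma first_square_crossing (c B st : int) : 0 <= c -> c * c < B -> 0 < st ->
  exists k : nat, (c + st * k%:Z) * (c + st * k%:Z) < B /\
                  B <= (c + st * k.+1%:Z) * (c + st * k.+1%:Z).
Proof.
move=> c0 cB st0.
pose crossed (k : nat) := B <= (c + st * k%:Z) * (c + st * k%:Z).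
have ex_crossed : exists k, crossed k.
  exists `|B|%N; rewrite /crossed.
  have hB : B <= `|B|%N%:Z by lia.
  have hn : `|B|%N%:Z <= c + st * `|B|%N%:Z by nia.
  nia.
case: (ex_minnP ex_crossed) => [[|k] crossed_k min_k].
- by move: crossed_k; rewrite /crossed mulr0 addr0 leNgt cB.
- exists k; split => //; rewrite ltNge; apply/negP => /min_k; lia.
Qed.

Lemma residue_with_small_norm {D s : int} (r : int) {p : nat} : (1 < p)%N ->
  (s = 0 \/ s = 1) -> ~~ minkowski_range D p ->
  exists t, (p%:Z %| t - r)%Z /\ - (4 * (p%:Z * p%:Z)) < (2 * t + s) * (2 * t + s) - D /\
            (2 * t + s) * (2 * t + s) - D < 4 * (p%:Z * p%:Z).
Proof.
rewrite /minkowski_range expr2 => p1 hs.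
have pz : 0 < p%:Z by lia.
have er := divz_eq r p%:Z.
set s0 := (r %% p%:Z)%Z in er *; set k0 := (r %/ p%:Z)%Z in er *.
have s00 : 0 <= s0 by apply: modz_ge0; lia.
have s0p : s0 < p%:Z by apply: ltz_pmod.
case: ifP => D0 /negP small.
- have hb : - D < 3 * (p%:Z * p%:Z) by lia.
  case: (lerP (2 * s0 + s) p%:Z) => hc.
  + exists s0; split; last by nia.
    by apply/dvdzP; exists (- k0); rewrite er; ring.
  + exists (s0 - p%:Z); split; last by nia.
    by apply/dvdzP; exists (- k0 - 1); rewrite er; ring.
- have hb : D < 5 * (p%:Z * p%:Z) by lia.
  have [|||k [below above]] := first_square_crossing (2 * s0 + s) (D + 4 * (p%:Z * p%:Z)) (2 * p%:Z);
    [lia | nia | lia |].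
  exists (s0 + p%:Z * k%:Z); split.
    by apply/dvdzP; exists (k%:Z - k0); rewrite er; ring.
  have -> : 2 * (s0 + p%:Z * k%:Z) + s = 2 * s0 + s + 2 * p%:Z * k%:Z by ring.
  set u := 2 * s0 + s + 2 * p%:Z * k%:Z in below above *.
  have u0 : 0 <= u by rewrite /u; nia.
  have next_u : 2 * s0 + s + 2 * p%:Z * k.+1%:Z = u + 2 * p%:Z by rewrite /u intS; ring.
  rewrite next_u in above.
  split; last by lia.
  (* if u^2 <= D - 4p^2 < p^2 then u < p, and (u + 2p)^2 < u^2 + 8p^2 <= D + 4p^2 *)
  case: (ltrP (- (4 * (p%:Z * p%:Z))) (u * u - D)) => // low.
  have : u < p%:Z by nia.
  nia.
Qed.

Section QuadraticDomain.
Variable D : int.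
Hypothesis hD : quad_disc D.

Lemma qsigma_cases : qsigma D = 0 \/ qsigma D = 1.
Proof. by case: hD. Qed.

Lemma quad_disc_eq : D = 4 * qd D + qsigma D.
Proof. by rewrite /qd /qsigma {1}(divz_eq D 4) mulrC. Qed.

Lemma four_norm a b :
  4 * od_norm D (mkOD a b) = (2 * a + qsigma D * b) * (2 * a + qsigma D * b) - D * b * b.
Proof.
rewrite /od_norm /=; move: quad_disc_eq qsigma_cases.
by set s := qsigma D; set d := qd D => -> [] ->; ring.
Qed.

(* Only 0 has norm 0: otherwise D b^2 = (2a + sigma b)^2 would make D a square. *)
Lemma od_norm_eq0 x : od_norm D x = 0 -> x = od_zero.
Proof.
case: x => a b N0.
have sq : D * b * b = (2 * a + qsigma D * b) * (2 * a + qsigma D * b).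
  by apply/eqP; rewrite eq_sym -subr_eq0 -four_norm N0 mulr0.
have [b0 | b0] := eqVneq b 0.
- move: N0; rewrite /od_norm b0 /= !mulr0 subr0 addr0 => /eqP.
  by rewrite mulf_eq0 orbb => /eqP ->.
- by case: hD => nsq _; case: nsq; exact: int_square_of_scaled b0 sq.
Qed.

(* O_D is an integral domain: multiply by conj(p) and cancel the integer N(p). *)
Lemma od_mul_cancel {p u v} : p <> od_zero -> od_mul D p u = od_mul D p v -> u = v.
Proof.
move=> p0 puv; have N0 : od_norm D p != 0 by apply/eqP => /od_norm_eq0.
apply: (@od_scale_inj D (od_norm D p)) => //.
by rewrite -(od_mul_conj D p) (od_mulC D p) -!od_mulA puv.
Qed.

Definition od_factors (x : OD) : Prop :=
  exists s, od_all_prime D s /\ od_prod D s = x.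

Lemma od_factors_prime {x} : od_prime D x -> od_factors x.
Proof. by move=> px; exists [:: x]; split => //=; rewrite od_mul1. Qed.

Lemma od_factors_mul {x y} : od_factors x -> od_factors y -> od_factors (od_mul D x y).
Proof.
case=> s [ps <-] [t [pt <-]]; exists (s ++ t); split.
- by elim: s ps => [|a s IH] //= [pa ps]; split; auto.
- by elim: s {ps} => [|a s IH] /=; rewrite ?od_mul1l // IH od_mulA.
Qed.

Lemma od_factors_nat {n m : nat} :
  (forall q, prime q -> (q <= n)%N -> od_factors (od_of_nat q)) ->
  (0 < m)%N -> (m <= n)%N -> od_factors (od_of_nat m).
Proof.
move=> fq; elim/ltn_ind: m => m IH m0 mn.
case: (ltngtP m 1) => [|m1|->]; [lia | | by exists [::]].
have pp := pdiv_prime m1; have p1 := prime_gt1 pp.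
have pm : (pdiv m %| m)%N by apply: pdiv_dvd.
rewrite -(divnK pm) mulnC (od_of_natM D); apply: od_factors_mul.
- by apply: fq; rewrite // (leq_trans (dvdn_leq _ pm)).
- apply: IH; [by rewrite ltn_Pdiv; lia | | exact: leq_trans (leq_div _ _) mn].
  by rewrite divn_gt0 ?prime_gt0 // dvdn_leq.
Qed.

Lemma cancel_prime_product {P u v s} : od_all_prime D s ->
  od_mul D (od_prod D s) P = od_mul D u v ->
  exists u' v', P = od_mul D u' v' /\ od_dvd D u' u /\ od_dvd D v' v.
Proof.
elim: s u v => [|pi s IH] /=.
  move=> u v _; rewrite od_mul1l => ->.
  by exists u, v; split => //; split; exists od_one; rewrite od_mul1.
move=> u v [[pi0 [_ pi_prime]] ps]; rewrite -od_mulA => e.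
have /pi_prime [[u1 eu]|[v1 ev]] : od_dvd D pi (od_mul D u v).
  by exists (od_mul D (od_prod D s) P).
- have e' : od_mul D pi (od_mul D (od_prod D s) P) = od_mul D pi (od_mul D u1 v).
    by rewrite e eu od_mulA.
  have [u' [v' [-> [[w eu1] dv]]]] := IH _ _ ps (od_mul_cancel pi0 e').
  exists u', v'; split => //; split => //; exists (od_mul D pi w).
  by rewrite eu eu1 !od_mulA (od_mulC D pi u').
- have e' : od_mul D pi (od_mul D (od_prod D s) P) = od_mul D pi (od_mul D u v1).
    by rewrite e ev !od_mulA (od_mulC D u pi).
  have [u' [v' [-> [du [w ev1]]]]] := IH _ _ ps (od_mul_cancel pi0 e').
  exists u', v'; split => //; split => //; exists (od_mul D pi w).
  by rewrite ev ev1 !od_mulA (od_mulC D pi v').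
Qed.

(* If w has norm +-p then p = w conj(w) up to a sign, a product of two primes. *)
Lemma od_factors_of_norm {p : nat} {w} : prime p ->
  od_norm D w = p%:Z \/ od_norm D w = - p%:Z -> od_factors (od_of_nat p).
Proof.
move=> pp hw; have w_prime := norm_prime_elem pp hw.
case: hw => hw.
- have conj_prime : od_prime D (od_conj D w).
    by apply: (norm_prime_elem pp); rewrite od_norm_conj; left.
  have := od_factors_mul (od_factors_prime w_prime) (od_factors_prime conj_prime).
  by rewrite od_mul_conj hw.
- have conj_prime : od_prime D (od_opp (od_conj D w)).
    by apply: (norm_prime_elem pp); rewrite od_norm_opp od_norm_conj; right.
  have := od_factors_mul (od_factors_prime w_prime) (od_factors_prime conj_prime).
  by rewrite od_mul_opp od_mul_conj hw /od_opp /= opprK oppr0.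
Qed.

(* A rational prime is a nonzero nonunit of O_D, its norm p^2 being neither 0 nor +-1. *)
Lemma od_of_nat_nonzero_nonunit {p : nat} : prime p ->
  od_of_nat p <> od_zero /\ ~ od_unit D (od_of_nat p).
Proof.
move=> pp; have p1 := prime_gt1 pp; split; first by case; lia.
by move/od_unit_norm; rewrite od_norm_scalar; nia.
Qed.

Section PrimeWithoutNormElement.
Variable p : nat.
Hypothesis p_prime : prime p.
Hypothesis no_norm_p : forall w, od_norm D w <> p%:Z /\ od_norm D w <> - p%:Z.

Lemma norm_square_split {y z} :
  od_norm D y * od_norm D z = p%:Z * p%:Z -> od_unit D y \/ od_unit D z.
Proof.
move=> h; have := congr1 absz h; rewrite !abszM /= => habs.
have : (`|od_norm D y| %| p ^ 2)%N by rewrite expnS expn1 -habs dvdn_mulr.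
case/(dvdn_pfactor _ _ p_prime) => [[|[|[|k]]]] //= _ hy.
- by left; apply: od_norm_unit; move: hy; rewrite expn0; lia.
- by have [ny1 ny2] := no_norm_p y; move: hy; rewrite expn1; lia.
- right; apply: od_norm_unit.
  have p0 := prime_gt0 p_prime.
  move: habs; rewrite hy expnS expn1 -{2}(muln1 (p * p)%N) => /eqP.
  by rewrite eqn_pmul2l ?muln_gt0 ?p0 // => /eqP; lia.
Qed.

Lemma od_of_nat_irreducible : od_irreducible D (od_of_nat p).
Proof.
have [p0 pnu] := od_of_nat_nonzero_nonunit p_prime.
split => //; split => // y z pyz; apply: norm_square_split.
by rewrite -od_normM -pyz od_norm_scalar.
Qed.

(* Cancelling the prime factors
   of m from p m = (t + tau)(t + tau') leaves p = u v with u | t + tau and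
   v | t + tau'; one of u, v is a unit, so p divides an element whose
   tau-coordinate is +-1. *)
Lemma no_small_norm_multiple {t m} :
  (forall q, prime q -> (q < p)%N -> od_factors (od_of_nat q)) ->
  od_norm D (mkOD t 1) = p%:Z * m -> (0 < `|m|)%N -> (`|m| < p)%N -> False.
Proof.
move=> fq Nt m0 mp.
have [sm [psm esm]] : od_factors (od_of_nat `|m|).
  apply: (od_factors_nat _ m0 (leqnn _)) => q pq qm.
  by apply: fq => //; apply: leq_ltn_trans qm mp.
have [e [e_sign me]] : exists e, e * e = 1 /\ m = e * `|m|%N%:Z.
  by apply: int_sign_split; lia.
pose P := mkOD (e * p%:Z) 0; pose al := mkOD t 1.
have sm_P : od_mul D (od_prod D sm) P = od_mul D al (od_conj D al).
  rewrite esm od_mul_conj Nt; move: me; set M := `|m|%N => me.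
  by apply: od_ext; rewrite /= ?me; ring.
have [u [v [Puv [u_al v_al]]]] := cancel_prime_product psm sm_P.
have Nuv : od_norm D u * od_norm D v = p%:Z * p%:Z.
  by rewrite -od_normM -Puv od_norm_scalar mulrACA e_sign mul1r.
have P_ndvd : forall w, od_dvd D P w -> od_b w = 1 \/ od_b w = -1 -> False.
  move=> w /od_scalar_dvd_b Pw hb.
  have bw1 : od_b w * od_b w = 1 by case: hb => ->; rewrite ?mulrNN mulr1.
  apply: (prime_ndvd_sign p_prime bw1).
  by apply: dvdz_trans Pw; apply: dvdz_mull.
case: (norm_square_split Nuv) => [u_unit | v_unit].
- have Pvu : P = od_mul D v u by rewrite Puv od_mulC.
  by apply: (P_ndvd _ (od_dvd_assoc D Pvu u_unit v_al)); right.
- by apply: (P_ndvd _ (od_dvd_assoc D Puv v_unit u_al)); left.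
Qed.

(* If p | N(beta) but p does not divide beta, then the norm form has a root
   r + tau modulo p: with u b = 1 mod p, take r = a u. *)
Lemma norm_root_mod_p {beta} :
  (p%:Z %| od_norm D beta)%Z -> ~ od_dvd D (od_of_nat p) beta ->
  exists r, (p%:Z %| od_norm D (mkOD r 1))%Z.
Proof.
case: beta => a b pN p_nd.
have pb : ~ (p%:Z %| b)%Z.
  move=> pb; apply: p_nd.
  have /dvdzP [ka ->] := prime_dvd_norm_a D p_prime pN pb.
  move/dvdzP: pb => [kb ->].
  by exists (mkOD ka kb); rewrite od_scale; apply: od_ext; rewrite /= mulrC.
have /coprimezP [[u v] /= uv] : coprimez b p%:Z.
  rewrite coprimez_sym coprimezE prime_coprime //.
  by apply/negP; rewrite -[(p %| _)%N]/((p%:Z %| b)%Z).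
exists (a * u); case/dvdzP: pN => n hn.
apply/dvdzP; exists (n * u * u + v * (qsigma D * (a * u) - qd D * (1 + b * u))).
have -> : od_norm D (mkOD (a * u) 1)
        = od_norm D (mkOD a b) * u * u
          + (1 - u * b) * (qsigma D * (a * u) - qd D * (1 + b * u)).
  by rewrite /od_norm /=; ring.
by rewrite hn -uv; ring.
Qed.

Lemma small_norm_multiple {r} : ~~ minkowski_range D p ->
  (p%:Z %| od_norm D (mkOD r 1))%Z ->
  exists t m, od_norm D (mkOD t 1) = p%:Z * m /\ (0 < `|m|)%N /\ (`|m| < p)%N.
Proof.
move=> outside pr.
have [t [tr [lo hi]]] := residue_with_small_norm r (prime_gt1 p_prime) qsigma_cases outside.
have /dvdzP [m hm] : (p%:Z %| od_norm D (mkOD t 1))%Z.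
  have -> : od_norm D (mkOD t 1) = od_norm D (mkOD r 1) + (t - r) * (t + r + qsigma D).
    by rewrite /od_norm /=; ring.
  by rewrite rpredD // dvdz_mulr.
exists t, m; split; first by rewrite hm mulrC.
have e4 := four_norm t 1; rewrite !mulr1 hm in e4.
split.
- rewrite absz_gt0; apply/eqP => m0; move: hm; rewrite m0 mul0r => /od_norm_eq0.
  by case=> _ /eqP; rewrite oner_eq0.
- have p1 := prime_gt1 p_prime; nia.
Qed.

Lemma prime_outside_minkowski_range :
  (forall q, prime q -> (q < p)%N -> od_factors (od_of_nat q)) ->
  ~~ minkowski_range D p -> od_prime D (od_of_nat p).
Proof.
move=> fq outside; have [p0 pnu] := od_of_nat_nonzero_nonunit p_prime.
split => //; split => // g h [z pgh].
apply: NNPP => /not_or_and [ng nh].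
have no_beta : forall beta, ~ od_dvd D (od_of_nat p) beta ->
    (p%:Z %| od_norm D beta)%Z -> False.
  move=> beta nb pb; have [r pr] := norm_root_mod_p pb nb.
  have [t [m [Nt [m0 mp]]]] := small_norm_multiple outside pr.
  exact: no_small_norm_multiple fq Nt m0 mp.
have : (p%:Z %| od_norm D g * od_norm D h)%Z.
  rewrite -od_normM pgh od_normM od_norm_scalar.
  by apply/dvdzP; exists (p%:Z * od_norm D z); ring.
by case/prime_dvdzM => // /no_beta; [apply | apply].
Qed.

End PrimeWithoutNormElement.

End QuadraticDomain.

Theorem mainTheorem3 (D : int) (hD : quad_disc D)
  (hyp : forall p : nat, prime p ->
     (if D < 0 then 3 * (p%:Z) ^+ 2 <= - D else 5 * (p%:Z) ^+ 2 <= D) ->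
     od_irreducible D (od_of_nat p) -> od_prime D (od_of_nat p)) :
  forall p : nat, prime p ->
    exists s : seq OD, od_all_prime D s /\
                       od_prod D s = od_of_nat p.
Proof.
move=> p; elim/ltn_ind: p => p IH pp; change (od_factors D (od_of_nat p)).
have fq : forall q, prime q -> (q < p)%N -> od_factors D (od_of_nat q).
  by move=> q pq qp; apply: IH.
have [[w hw] | no_w] := classic (exists w, od_norm D w = p%:Z \/ od_norm D w = - p%:Z).
  exact: (od_factors_of_norm D pp hw).
have no_norm_p : forall w, od_norm D w <> p%:Z /\ od_norm D w <> - p%:Z.
  by move=> w; split => hw; apply: no_w; exists w; [left | right].
apply: od_factors_prime.
case: (boolP (minkowski_range D p)) => range.
- exact: hyp pp range (od_of_nat_irreducible D p pp no_norm_p).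
- exact: prime_outside_minkowski_range.
Qed.
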